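(* Let $\Phi$ be the Couch–Torrence inversion, given in Schwarzschild-like coordinates by $\Phi(t,r,\omega)=\left(t,\frac{rM}{r-M},\omega\right)$. (i) (Exterior.) $\Phi$ is a diffeomorphism of $\mathrm{Ext}$ onto itself with $\Phi\circ\Phi=\mathrm{id}$. It satisfies $\Phi^*g=\frac{M^2}{(r-M)^2}\,g$, and it is an isometry of the rescaled metric: $\Phi^*\hat g=\hat g$, where $\hat g=r^{-2}g$. Every point of the photon sphere $\{r=2M\}$ is fixed by $\Phi$. In the outgoing chart of the starting point and the ingoing chart of the image point, $\Phi$ reads $(u,R,\omega)\mapsto(v',R',\omega')=\left(u,\frac{1-MR}{M},\omega\right)$. Consequently $\Phi$ extends to the conformal boundary and exchanges the future horizon $\mathscr H^+$ with future null infinity $\mathscr I^+$. Likewise it exchanges the past horizon $\mathscr H^-$ with past null infinity $\mathscr I^-$. (ii) (Interior.) Let $\mathrm{Int}$ be the interior region $0<r<M$, written in outgoing Eddington–Finkelstein coordinates $(u,r,\omega)\in\mathbb R\times(0,M)\times S^2$ with metric $g=F(r)\,du^2+2\,du\,dr-r^2d\omega^2$. Let $\mathcal N=\mathbb R_v\times(-\infty,0)_r\times S^2$ carry the metric $g_{\mathcal N}=F(r)\,dv^2+2\,dv\,dr-r^2d\omega^2$. Define the map $\Phi:\mathrm{Int}\to\mathcal N$ by $(u,r,\omega)\mapsto\left(u+2r_*(r),\frac{rM}{r-M},\omega\right)$. Then: - $\Phi$ is a diffeomorphism onto $\mathcal N$; - $\Phi^*g_{\mathcal N}=\frac{M^2}{(r-M)^2}g$;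 - $\Phi^*(r^{-2}g_{\mathcal N})=r^{-2}g$, where on each side $r$ denotes the respective radial coordinate. Under the change of coordinate $r'=-r\in(0,\infty)$, $g_{\mathcal N}$ becomes $\left(1+\frac{M}{r'}\right)^2dv^2-2\,dv\,dr'-r'^2d\omega^2$. This is the extreme Reissner–Nordström metric with mass $-M$ and charge $\pm M$ in ingoing Eddington–Finkelstein form. Under $\Phi$, the singularity $r\to0^+$ of $\mathrm{Int}$ corresponds to the singularity $r'\to0^+$ of $\mathcal N$, and the horizon $r\to M^-$ corresponds to the infinity $r'\to+\infty$ of $\mathcal N$.
   Context: Fix $M>0$ and let $F(r)=(1-M/r)^2$. The exterior of the extreme Reissner–Nordström black hole is $\mathrm{Ext}=\mathbb R_t\times(M,\infty)_r\times S^2_\omega$ with metric $g=F(r)\,dt^2-F(r)^{-1}dr^2-r^2d\omega^2$, where $d\omega^2$ is the round metric of the unit sphere. The Regge–Wheeler coordinate is $r_*=r-M+2M\log\frac{|r-M|}{M}-\frac{M^2}{r-M}$ (defined for $r\neq M$). On $(M,\infty)$ one has $dr_*/dr=1/F$ and $r_*(2M)=0$. Put $u=t-r_*$, $v=t+r_*$, $R=1/r$. The rescaled metric $\hat g=R^2g$ reads - $\hat g=R^2(1-MR)^2du^2-2\,du\,dR-d\omega^2$ in the outgoing chart $(u,R,\omega)$; - $\hat g=R^2(1-MR)^2dv^2+2\,dv\,dR-d\omega^2$ in the ingoing chart $(v,R,\omega)$. In the outgoing chart, $\hat g$ extends smoothly to $R=0$, defining future null infinity $\mathscr I^+=\{R=0\}$,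 and to $R=1/M$, defining the past horizon $\mathscr H^-$. In the ingoing chart, $\{R=0\}$ is past null infinity $\mathscr I^-$ and $\{R=1/M\}$ is the future horizon $\mathscr H^+$. The time orientation is the one for which $\partial_t$ is future-directed. *)

From Stdlib Require Import Reals.
From Coquelicot Require Import Coquelicot.
Open Scope R_scope.

Definition fun2 := R -> R -> R.
Definition dom2 := R -> R -> Prop.

Definition d0 (f : fun2) : fun2 := fun x y => Derive (fun s => f s y) x.
Definition d1 (f : fun2) : fun2 := fun x y => Derive (fun s => f x s) y.

Fixpoint Ck (k : nat) (D : dom2) (f : fun2) : Prop :=
  match k with
  | O => forall x y, D x y ->
           continuous (fun p : R * R => f (fst p) (snd p)) (x, y)
  | S k' => (forall x y, D x y ->
               ex_derive (fun s => f s y) x /\ ex_derive (fun s => f x s) y)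
            /\ Ck k' D f /\ Ck k' D (d0 f) /\ Ck k' D (d1 f)
  end.

Definition smooth2 (D : dom2) (f : fun2) : Prop := forall k, Ck k D f.

(* A map of the form (x, y, omega) |-> (p0 x y, p1 x y, omega), i.e. the
   identity on the sphere factor, is a diffeomorphism from D1 x S^2 onto
   D2 x S^2 iff (p0,p1) is a diffeomorphism from D1 onto D2. *)
Definition diffeo2 (D1 D2 : dom2) (p0 p1 : fun2) : Prop :=
  smooth2 D1 p0 /\ smooth2 D1 p1 /\
  (forall x y, D1 x y -> D2 (p0 x y) (p1 x y)) /\
  exists q0 q1 : fun2,
    smooth2 D2 q0 /\ smooth2 D2 q1 /\
    (forall x y, D2 x y -> D1 (q0 x y) (q1 x y)) /\
    (forall x y, D1 x y -> q0 (p0 x y) (p1 x y) = x /\ q1 (p0 x y) (p1 x y) = y) /\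
    (forall x y, D2 x y -> p0 (q0 x y) (q1 x y) = x /\ p1 (q0 x y) (q1 x y) = y).

(* Warped metrics on (2d region) x S^2:                                *)
(*   g = g00 dx^2 + 2 g01 dx dy + g11 dy^2 + gang domega^2             *)
(* where domega^2 is the round metric of the unit sphere.               *)

Record wmetric := WMetric {
  g00 : fun2; g01 : fun2; g11 : fun2; gang : fun2 }.

(* Pullback of G by (x,y,omega) |-> (p0 x y, p1 x y, omega). *)
Definition pullback (p0 p1 : fun2) (G : wmetric) : wmetric :=
  WMetric
    (fun x y => let a := d0 p0 x y in let c := d0 p1 x y in
       let X := p0 x y in let Y := p1 x y in
       g00 G X Y * a ^ 2 + 2 * g01 G X Y * a * c + g11 G X Y * c ^ 2)
    (fun x y => let a := d0 p0 x y in let b := d1 p0 x y in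
       let c := d0 p1 x y in let d := d1 p1 x y in
       let X := p0 x y in let Y := p1 x y in
       g00 G X Y * a * b + g01 G X Y * (a * d + b * c) + g11 G X Y * c * d)
    (fun x y => let b := d1 p0 x y in let d := d1 p1 x y in
       let X := p0 x y in let Y := p1 x y in
       g00 G X Y * b ^ 2 + 2 * g01 G X Y * b * d + g11 G X Y * d ^ 2)
    (fun x y => gang G (p0 x y) (p1 x y)).

Definition scale (k : fun2) (G : wmetric) : wmetric :=
  WMetric (fun x y => k x y * g00 G x y) (fun x y => k x y * g01 G x y)
          (fun x y => k x y * g11 G x y) (fun x y => k x y * gang G x y).

Definition meq_on (D : dom2) (G H : wmetric) : Prop :=
  forall x y, D x y ->
    g00 G x y = g00 H x y /\ g01 G x y = g01 H x y /\
    g11 G x y = g11 H x y /\ gang G x y = gang H x y.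

Definition F (M r : R) : R := (1 - M / r) ^ 2.

Definition rstar (M r : R) : R :=
  r - M + 2 * M * ln (Rabs (r - M) / M) - M ^ 2 / (r - M).

Definition PhiR (M r : R) : R := r * M / (r - M).

(* Regions (2d parts; the S^2 factor is implicit). *)
Definition ExtD (M : R) : dom2 := fun t r => M < r.
Definition IntD (M : R) : dom2 := fun u r => 0 < r < M.
Definition ND : dom2 := fun v r => r < 0.
Definition NposD : dom2 := fun v r' => 0 < r'.

Definition gExt (M : R) : wmetric :=
  WMetric (fun t r => F M r) (fun t r => 0) (fun t r => - / F M r)
          (fun t r => - r ^ 2).

(* g = F du^2 + 2 du dr - r^2 domega^2  (outgoing EF, interior)
   also used for g_N = F dv^2 + 2 dv dr - r^2 domega^2 *)
Definition gEF (M : R) : wmetric :=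
  WMetric (fun u r => F M r) (fun u r => 1) (fun u r => 0)
          (fun u r => - r ^ 2).

Definition rinv2 : fun2 := fun x r => / r ^ 2.

Definition cfac (M : R) : fun2 := fun x r => M ^ 2 / (r - M) ^ 2.

Definition RN_f (m q r : R) : R := 1 - 2 * m / r + q ^ 2 / r ^ 2.

Definition gRN_in (m q : R) : wmetric :=
  WMetric (fun v r => RN_f m q r) (fun v r => -1) (fun v r => 0)
          (fun v r => - r ^ 2).

(* All maps in the theorem have the "shear-radial" form
     (x, y, omega) |-> (x + k y, phi y, omega),
   with k, phi built from r, ln |r - M| and 1/(r - M).  The proof is organised
   around this observation:
   1. Smoothness: a function a*x + h(y) is C^oo on a strip I x R as soon as h
      lies in a class of one-variable functions that contains the constants and
      is closed under differentiation on I; the class [radial M] generated by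
      r, ln(|r-M|/M), 1/(r-M) is such a class away from r = M.
   2. Diffeomorphism: both maps are involutions (since r_*(Phi r) = - r_* r),
      so each is its own smooth inverse.
   3. Metrics: the pullback of a warped metric under a shear-radial map is
      given by an explicit formula in k' and phi'; with phi' = -M^2/(r-M)^2,
      r_*' = 1/F and F(Phi r) = M^2/r^2 the conformal identities reduce to
      field arithmetic, and the rescaled statements follow from
      (Phi r)^-2 * M^2/(r-M)^2 = r^-2.
   4. Limits: -Phi tends to 0+ at 0+ (continuity and sign) and to +oo at M-
      (comparison with a multiple of 1/(M - r)). *)

From Pilot Require Import Defs.
From Stdlib Require Import Reals Lra.
From Coquelicot Require Import Coquelicot.
Open Scope R_scope.

Section AffineSmooth.

Variable I : R -> Prop.
Hypothesis I_open : open I.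
Variable S : (R -> R) -> Prop.
Hypothesis S_const : forall c, S (fun _ => c).
Hypothesis S_derive :
  forall h, S h -> exists h', S h' /\ forall y, I y -> is_derive h y (h' y).

Definition affine_in (f : fun2) : Prop :=
  exists a h, S h /\ forall x y, I y -> f x y = a * x + h y.

(* Induction on k: f is continuous, and its partial derivatives are again
   affine in x (d0 f = a, d1 f = h'), so the class is stable under d0, d1. *)
Lemma affine_Ck k f : affine_in f -> Ck k (fun _ y => I y) f.
Proof.
  revert f; induction k as [|k IHk]; intros f [a [h [Sh Hf]]].
  - intros x y Hy.
    destruct (S_derive h Sh) as [h' [_ Hh']].
    apply continuous_ext_loc with (fun p : R * R => plus (mult a (fst p)) (h (snd p))).
    + apply filter_imp with (fun p : R * R => I (snd p)).
      * intros [u v] Hv; symmetry; now apply Hf.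
      * exact (continuous_snd x y I (I_open y Hy)).
    + apply (continuous_plus (fun p : R * R => mult a (fst p)) (fun p => h (snd p))).
      * apply (continuous_mult (fun _ : R * R => a) fst);
          [apply continuous_const | apply continuous_fst].
      * apply (continuous_comp snd h); [apply continuous_snd |].
        apply (ex_derive_continuous (K := R_AbsRing) (V := R_NormedModule)).
        exists (h' y); now apply Hh'.
  - destruct (S_derive h Sh) as [h' [Sh' Hh']].
    assert (Hd0 : forall x y, I y -> is_derive (fun s => f s y) x a).
    { intros x y Hy. apply is_derive_ext with (fun s => a * s + h y).
      - intros s; symmetry; now apply Hf.
      - auto_derive; auto; ring. }
    assert (Hd1 : forall x y, I y -> is_derive (fun s => f x s) y (h' y)).
    { intros x y Hy. apply is_derive_ext_loc with (fun s => a * x + h s).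
      - apply filter_imp with I; [intros s Hs; symmetry; now apply Hf | now apply I_open].
      - replace (h' y) with (plus zero (h' y)) by (unfold plus, zero; simpl; ring).
        apply (is_derive_plus (fun _ => a * x) h);
          [apply (is_derive_const (K := R_AbsRing) (V := R_NormedModule)) | now apply Hh']. }
    split; [|split; [|split]].
    + intros x y Hy; split; [exists a | exists (h' y)]; auto.
    + apply IHk; exists a, h; auto.
    + apply IHk; exists 0, (fun _ => a); split; auto.
      intros x y Hy; rewrite Rmult_0_l, Rplus_0_l; now apply is_derive_unique, Hd0.
    + apply IHk; exists 0, h'; split; auto.
      intros x y Hy; rewrite Rmult_0_l, Rplus_0_l; now apply is_derive_unique, Hd1.
Qed.

Lemma affine_smooth f : affine_in f -> smooth2 (fun _ y => I y) f.
Proof. intros Hf k; now apply affine_Ck. Qed.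

End AffineSmooth.

Inductive radial (M : R) : (R -> R) -> Prop :=
  | radial_const c : radial M (fun _ => c)
  | radial_id : radial M (fun r => r)
  | radial_log : radial M (fun r => ln (Rabs (r - M) / M))
  | radial_pole : radial M (fun r => / (r - M))
  | radial_plus f g : radial M f -> radial M g -> radial M (fun r => f r + g r)
  | radial_mult f g : radial M f -> radial M g -> radial M (fun r => f r * g r).

Lemma is_derive_log_abs M r : 0 < M -> r <> M ->
  is_derive (fun s => ln (Rabs (s - M) / M)) r (/ (r - M)).
Proof.
  intros HM Hr.
  assert (Habs : 0 < Rabs (r - M)) by (apply Rabs_pos_lt; lra).
  auto_derive; replace (r + - M) with (r - M) by ring.
  - repeat split; [lra | apply Rmult_lt_0_compat; [lra | apply Rinv_0_lt_compat; lra]].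
  - destruct (Rlt_dec (r - M) 0).
    + rewrite sign_eq_m1, Rabs_left by lra. field; split; lra.
    + rewrite sign_eq_1, Rabs_pos_eq by lra. field; split; lra.
Qed.

Lemma radial_derive M : 0 < M -> forall h, radial M h ->
  exists h', radial M h' /\ forall r, r <> M -> is_derive h r (h' r).
Proof.
  intros HM h Hh; induction Hh as [c| | | |f g _ [f' [Hf Hf']] _ [g' [Hg Hg']]
                                  |f g Rf [f' [Hf Hf']] Rg [g' [Hg Hg']]].
  - exists (fun _ => 0); split; [constructor | intros; auto_derive; auto].
  - exists (fun _ => 1); split; [constructor | intros; auto_derive; auto].
  - exists (fun r => / (r - M)); split; [constructor | intros r Hr; now apply is_derive_log_abs].
  - exists (fun r => (-1) * (/ (r - M) * / (r - M))); split; [repeat constructor|].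
    intros r Hr; auto_derive; [lra | field; lra].
  - exists (fun r => f' r + g' r); split; [now constructor|].
    intros r Hr; apply (is_derive_plus f g); auto.
  - exists (fun r => f' r * g r + f r * g' r); split; [repeat constructor; auto|].
    intros r Hr; apply (is_derive_mult f g); auto.
    intros; apply Rmult_comm.
Qed.

Lemma radial_affine_smooth M (I : R -> Prop) a h (f : fun2) :
  0 < M -> open I -> (forall r, I r -> r <> M) -> radial M h ->
  (forall x y, f x y = a * x + h y) -> smooth2 (fun _ y => I y) f.
Proof.
  intros HM HI HIM Hh Hf.
  apply (affine_smooth I HI (radial M)); [constructor| |].
  - intros g Hg; destruct (radial_derive M HM g Hg) as [g' [Hg' Hd]].
    exists g'; split; auto.
  - exists a, h; auto.
Qed.

Lemma couch_torrence_maps_smooth M (I : R -> Prop) :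
  0 < M -> open I -> (forall r, I r -> r <> M) ->
  smooth2 (fun _ y => I y) (fun t r => t)
  /\ smooth2 (fun _ y => I y) (fun t r => PhiR M r)
  /\ smooth2 (fun _ y => I y) (fun u r => u + 2 * rstar M r).
Proof.
  intros HM HI HIM; split; [|split].
  - apply (radial_affine_smooth M I 1 (fun _ => 0)); auto; [constructor | intros; ring].
  - apply (radial_affine_smooth M I 0 (fun r => r * M * / (r - M))); auto.
    + repeat constructor.
    + intros; unfold PhiR, Rdiv; ring.
  - apply (radial_affine_smooth M I 1
      (fun r => 2 * (r + - M + 2 * M * ln (Rabs (r - M) / M) + - (M * M) * / (r - M)))); auto.
    + repeat constructor.
    + intros; unfold rstar, Rdiv; ring.
Qed.

Lemma involutive_diffeo2 (D1 D2 : dom2) (p0 p1 : fun2) :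
  smooth2 D1 p0 -> smooth2 D1 p1 -> smooth2 D2 p0 -> smooth2 D2 p1 ->
  (forall x y, D1 x y -> D2 (p0 x y) (p1 x y)) ->
  (forall x y, D2 x y -> D1 (p0 x y) (p1 x y)) ->
  (forall x y, D1 x y \/ D2 x y ->
     p0 (p0 x y) (p1 x y) = x /\ p1 (p0 x y) (p1 x y) = y) ->
  diffeo2 D1 D2 p0 p1.
Proof.
  intros S10 S11 S20 S21 H12 H21 Hinv.
  repeat split; auto.
  exists p0, p1; repeat split; auto; apply Hinv; auto.
Qed.

Lemma PhiR_involutive M r : 0 < M -> r <> M -> PhiR M (PhiR M r) = r.
Proof.
  intros HM Hr; unfold PhiR; field; split; [lra|].
  intro E; ring_simplify in E; nra.
Qed.

Lemma PhiR_minus_M M r : r <> M -> PhiR M r - M = M ^ 2 / (r - M).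
Proof. intros Hr; unfold PhiR; field; lra. Qed.

Lemma PhiR_exterior M r : 0 < M -> M < r -> M < PhiR M r.
Proof.
  intros HM Hr; assert (0 < M ^ 2 / (r - M)) by (apply Rdiv_lt_0_compat; nra).
  rewrite <- (PhiR_minus_M M r) in *; lra.
Qed.

Lemma PhiR_interior M r : 0 < M -> 0 < r < M -> PhiR M r < 0.
Proof.
  intros HM Hr; replace (PhiR M r) with (- (r * M / (M - r))) by (unfold PhiR; field; lra).
  assert (0 < r * M / (M - r)) by (apply Rdiv_lt_0_compat; nra); lra.
Qed.

Lemma PhiR_negative M r : 0 < M -> r < 0 -> 0 < PhiR M r < M.
Proof.
  intros HM Hr; split.
  - replace (PhiR M r) with ((- r) * M / (M - r)) by (unfold PhiR; field; lra).
    apply Rdiv_lt_0_compat; nra.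
  - assert (0 < M ^ 2 / (M - r)) by (apply Rdiv_lt_0_compat; nra).
    replace (PhiR M r) with (M - M ^ 2 / (M - r)) by (unfold PhiR; field; lra); lra.
Qed.

Lemma rstar_PhiR M r : 0 < M -> r <> M -> rstar M (PhiR M r) = - rstar M r.
Proof.
  intros HM Hr; unfold rstar; rewrite PhiR_minus_M by lra.
  replace (Rabs (M ^ 2 / (r - M)) / M) with (/ (Rabs (r - M) / M)).
  - rewrite ln_Rinv by (apply Rdiv_lt_0_compat; [apply Rabs_pos_lt|]; lra).
    unfold PhiR; field; lra.
  - unfold Rdiv; rewrite Rabs_mult, Rabs_inv, (Rabs_pos_eq (M ^ 2)) by apply pow2_ge_0.
    assert (Rabs (r - M) <> 0) by (apply Rabs_no_R0; lra).
    field; lra.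
Qed.

Lemma exterior_diffeo M : 0 < M ->
  diffeo2 (ExtD M) (ExtD M) (fun t r => t) (fun t r => PhiR M r).
Proof.
  intros HM.
  destruct (couch_torrence_maps_smooth M (fun r => M < r) HM (open_gt M))
    as [S0 [S1 _]]; [intros; lra|].
  apply involutive_diffeo2; auto.
  - intros t r Hr; now apply PhiR_exterior.
  - intros t r Hr; now apply PhiR_exterior.
  - intros t r [Hr|Hr]; (split; [reflexivity | apply PhiR_involutive; auto]);
      unfold ExtD in Hr; lra.
Qed.

Lemma interior_diffeo M : 0 < M ->
  diffeo2 (IntD M) ND (fun u r => u + 2 * rstar M r) (fun u r => PhiR M r).
Proof.
  intros HM.
  destruct (couch_torrence_maps_smooth M (fun r => 0 < r < M) HM
              (open_and _ _ (open_gt 0) (open_lt M))) as [_ [Si1 Si0]]; [intros; lra|].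
  destruct (couch_torrence_maps_smooth M (fun r => r < 0) HM (open_lt 0))
    as [_ [Sn1 Sn0]]; [intros; lra|].
  apply involutive_diffeo2; auto.
  - intros u r Hr; now apply PhiR_interior.
  - intros v r Hr; now apply PhiR_negative.
  - intros u r Hr; assert (r <> M) by (unfold IntD, ND in Hr; lra).
    rewrite rstar_PhiR, PhiR_involutive by lra; split; [ring | reflexivity].
Qed.

Lemma is_derive_PhiR M r : r <> M -> is_derive (PhiR M) r (- M ^ 2 / (r - M) ^ 2).
Proof. intros Hr; unfold PhiR; auto_derive; [lra | field; lra]. Qed.

Lemma is_derive_rstar M r : 0 < M -> r <> 0 -> r <> M -> is_derive (rstar M) r (/ F M r).
Proof.
  intros HM H0 Hr; unfold rstar; auto_derive; replace (r + - M) with (r - M) by ring.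
  - repeat split; [lra | | lra].
    apply Rmult_lt_0_compat; [apply Rabs_pos_lt; lra | apply Rinv_0_lt_compat; lra].
  - unfold F; destruct (Rlt_dec (r - M) 0).
    + rewrite sign_eq_m1, Rabs_left by lra. field; repeat split; lra.
    + rewrite sign_eq_1, Rabs_pos_eq by lra. field; repeat split; lra.
Qed.

Lemma F_PhiR M r : 0 < M -> r <> 0 -> r <> M -> F M (PhiR M r) = M ^ 2 / r ^ 2.
Proof.
  intros HM H0 Hr; unfold F, PhiR.
  replace (1 - M / (r * M / (r - M))) with (M / r) by (field; repeat split; lra).
  field; auto.
Qed.

(* Pullback of a warped metric by a shear-radial map (x,y) |-> (x + k y, phi y):
   the Jacobian has entries 1, k', 0, phi'. *)
Lemma pullback_shear (G : wmetric) (p0 p1 : fun2) (k phi : R -> R) (kappa psi x y : R) :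
  (forall x y, p0 x y = x + k y) -> (forall x y, p1 x y = phi y) ->
  is_derive k y kappa -> is_derive phi y psi ->
  g00 (pullback p0 p1 G) x y = g00 G (x + k y) (phi y)
  /\ g01 (pullback p0 p1 G) x y
       = g00 G (x + k y) (phi y) * kappa + g01 G (x + k y) (phi y) * psi
  /\ g11 (pullback p0 p1 G) x y
       = g00 G (x + k y) (phi y) * kappa ^ 2
         + 2 * g01 G (x + k y) (phi y) * kappa * psi + g11 G (x + k y) (phi y) * psi ^ 2
  /\ gang (pullback p0 p1 G) x y = gang G (x + k y) (phi y).
Proof.
  intros Hp0 Hp1 Hk Hphi.
  assert (Ea : Defs.d0 p0 x y = 1).
  { apply is_derive_unique, (is_derive_ext (fun s => s + k y)); [intros; now rewrite Hp0|].
    auto_derive; auto; ring. }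
  assert (Eb : Defs.d1 p0 x y = kappa).
  { apply is_derive_unique, (is_derive_ext (fun s => x + k s)); [intros; now rewrite Hp0|].
    replace kappa with (plus zero kappa) by (unfold plus, zero; simpl; ring).
    apply (is_derive_plus (fun _ => x) k); auto.
    apply (is_derive_const (K := R_AbsRing) (V := R_NormedModule)). }
  assert (Ec : Defs.d0 p1 x y = 0).
  { apply is_derive_unique, (is_derive_ext (fun _ => phi y)); [intros; now rewrite Hp1|].
    apply (is_derive_const (K := R_AbsRing) (V := R_NormedModule)). }
  assert (Ed : Defs.d1 p1 x y = psi).
  { apply is_derive_unique, (is_derive_ext phi); [intros; now rewrite Hp1 | auto]. }
  simpl; rewrite Ea, Eb, Ec, Ed, Hp0, Hp1; repeat split; ring.
Qed.

(* If p^* G = c G and (k o p) c = k on D, then p is an isometry of k G on D;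
   used with k = r^-2 to pass from the conformal identity to the rescaled one. *)
Lemma conformal_to_rescaled (D : dom2) (p0 p1 : fun2) (G : wmetric) (c k : fun2) :
  meq_on D (pullback p0 p1 G) (scale c G) ->
  (forall x y, D x y -> k (p0 x y) (p1 x y) * c x y = k x y) ->
  meq_on D (pullback p0 p1 (scale k G)) (scale k G).
Proof.
  intros H Hk x y Hxy.
  destruct (H x y Hxy) as [E00 [E01 [E11 Eang]]]; specialize (Hk x y Hxy).
  simpl in *; rewrite <- Hk.
  repeat split.
  - transitivity (k (p0 x y) (p1 x y) * (c x y * g00 G x y)); [rewrite <- E00|]; ring.
  - transitivity (k (p0 x y) (p1 x y) * (c x y * g01 G x y)); [rewrite <- E01|]; ring.
  - transitivity (k (p0 x y) (p1 x y) * (c x y * g11 G x y)); [rewrite <- E11|]; ring.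
  - transitivity (k (p0 x y) (p1 x y) * (c x y * gang G x y)); [rewrite <- Eang|]; ring.
Qed.

Lemma rinv2_PhiR_cfac M x x' r : 0 < M -> r <> 0 -> r <> M ->
  rinv2 x' (PhiR M r) * cfac M x r = rinv2 x r.
Proof. intros HM H0 Hr; unfold rinv2, cfac, PhiR; field; repeat split; lra. Qed.

(* In null coordinates the exterior inversion reads u |-> v' = u (resp. v |-> u' = v)
   and R |-> R' = (1 - M R)/M. *)
Lemma chart_form M r : 0 < M -> M < r ->
  rstar M (PhiR M r) = - rstar M r /\ / PhiR M r = (1 - M * / r) / M.
Proof. intros HM Hr; split; [apply rstar_PhiR; lra | unfold PhiR; field; lra]. Qed.

Lemma exterior_conformal M : 0 < M ->
  meq_on (ExtD M) (pullback (fun t r => t) (fun t r => PhiR M r) (gExt M))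
                  (scale (cfac M) (gExt M)).
Proof.
  intros HM t r Hr; unfold ExtD in Hr.
  destruct (pullback_shear (gExt M) (fun t r => t) (fun t r => PhiR M r)
              (fun _ => 0) (PhiR M) 0 (- M ^ 2 / (r - M) ^ 2) t r)
    as [E00 [E01 [E11 Eang]]];
    [intros; ring | reflexivity | auto_derive; auto | apply is_derive_PhiR; lra |].
  rewrite E00, E01, E11, Eang; simpl; rewrite F_PhiR by lra.
  unfold cfac, F, PhiR; repeat split; field; repeat split; lra.
Qed.

Lemma interior_conformal M : 0 < M ->
  meq_on (IntD M)
    (pullback (fun u r => u + 2 * rstar M r) (fun u r => PhiR M r) (gEF M))
    (scale (cfac M) (gEF M)).
Proof.
  intros HM u r Hr; unfold IntD in Hr.
  destruct (pullback_shear (gEF M) (fun u r => u + 2 * rstar M r) (fun u r => PhiR M r)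
              (fun r => 2 * rstar M r) (PhiR M) (2 * / F M r) (- M ^ 2 / (r - M) ^ 2) u r)
    as [E00 [E01 [E11 Eang]]]; [reflexivity | reflexivity | | apply is_derive_PhiR; lra |].
  { apply (is_derive_scal (rstar M) r 2 (/ F M r)), is_derive_rstar; lra. }
  rewrite E00, E01, E11, Eang; simpl; rewrite F_PhiR by lra.
  unfold cfac, F, PhiR; repeat split; field; repeat split; lra.
Qed.

Lemma exterior_rescaled_isometry M : 0 < M ->
  meq_on (ExtD M)
    (pullback (fun t r => t) (fun t r => PhiR M r) (scale rinv2 (gExt M)))
    (scale rinv2 (gExt M)).
Proof.
  intros HM; apply conformal_to_rescaled with (cfac M); [now apply exterior_conformal|].
  intros t r Hr; unfold ExtD in Hr; apply rinv2_PhiR_cfac; lra.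
Qed.

Lemma interior_rescaled_isometry M : 0 < M ->
  meq_on (IntD M)
    (pullback (fun u r => u + 2 * rstar M r) (fun u r => PhiR M r) (scale rinv2 (gEF M)))
    (scale rinv2 (gEF M)).
Proof.
  intros HM; apply conformal_to_rescaled with (cfac M); [now apply interior_conformal|].
  intros u r Hr; unfold IntD in Hr; apply rinv2_PhiR_cfac; lra.
Qed.

Lemma negative_mass_form M :
  meq_on NposD (pullback (fun v r' => v) (fun v r' => - r') (gEF M))
    (WMetric (fun v r' => (1 + M / r') ^ 2) (fun v r' => -1)
             (fun v r' => 0) (fun v r' => - r' ^ 2)).
Proof.
  intros v r Hr; unfold NposD in Hr.
  destruct (pullback_shear (gEF M) (fun v r' => v) (fun v r' => - r')
              (fun _ => 0) Ropp 0 (-1) v r)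
    as [E00 [E01 [E11 Eang]]];
    [intros; ring | reflexivity | auto_derive; auto | auto_derive; auto; ring |].
  rewrite E00, E01, E11, Eang; simpl; unfold F; repeat split; field; lra.
Qed.

Lemma RN_f_extreme M q r : q ^ 2 = M ^ 2 -> r <> 0 -> RN_f (- M) q r = (1 + M / r) ^ 2.
Proof. intros Hq Hr; unfold RN_f; rewrite Hq; field; auto. Qed.

Lemma negative_mass_RN M q : q = M \/ q = - M ->
  meq_on NposD (pullback (fun v r' => v) (fun v r' => - r') (gEF M)) (gRN_in (- M) q).
Proof.
  intros Hq v r Hr; unfold NposD in Hr.
  destruct (negative_mass_form M v r Hr) as [E00 [E01 [E11 Eang]]]; simpl in *.
  rewrite RN_f_extreme; [auto | destruct Hq; subst; ring | lra].
Qed.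

Lemma filterlim_within_right (f : R -> R) (D : R -> Prop) (x l : R) :
  ex_derive f x -> f x = l -> locally x (fun r => D r -> l < f r) ->
  filterlim f (within D (locally x)) (at_right l).
Proof.
  intros Hd Hfx Habove P [e He].
  assert (Hnear : locally x (fun r => ball l e (f r))).
  { rewrite <- Hfx; apply (ex_derive_continuous (K := R_AbsRing) (V := R_NormedModule));
      [exact Hd | apply locally_ball]. }
  unfold filtermap, within.
  apply filter_imp with (fun r => ball l e (f r) /\ (D r -> l < f r)).
  - intros r [Hb Hr] HD; apply He; auto.
  - now apply filter_and.
Qed.

Lemma singularity_to_singularity M : 0 < M ->
  filterlim (fun r => - PhiR M r) (at_right 0) (at_right 0).
Proof.
  intros HM; apply filterlim_within_right.
  - unfold PhiR; auto_derive; lra.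
  - unfold PhiR; field; lra.
  - exists (mkposreal M HM); intros r Hr Hpos.
    change (Rabs (r - 0) < M) in Hr; apply Rabs_def2 in Hr.
    pose proof (PhiR_interior M r HM); lra.
Qed.

(* The horizon r -> M- is sent to r' -> +oo, since -Phi r >= (M^2/2)/(M - r)
   for M/2 < r < M. *)
Lemma horizon_to_infinity M : 0 < M ->
  filterlim (fun r => - PhiR M r) (at_left M) (Rbar_locally p_infty).
Proof.
  intros HM.
  apply filterlim_ge_p_infty with (fun r => / ((M - r) * (2 / M ^ 2))).
  - assert (HM2 : 0 < M / 2) by lra.
    exists (mkposreal _ HM2); intros r Hr Hlt.
    change (Rabs (r - M) < M / 2) in Hr; apply Rabs_def2 in Hr.
    replace (/ ((M - r) * (2 / M ^ 2))) with (M / 2 * (M / (M - r))) by (field; lra).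
    replace (- PhiR M r) with (r * (M / (M - r))) by (unfold PhiR; field; lra).
    apply Rmult_le_compat_r; [apply Rlt_le, Rdiv_lt_0_compat|]; lra.
  - apply (filterlim_comp _ _ _ _ Rinv _ (at_right 0)); [|apply filterlim_Rinv_0_right].
    apply filterlim_within_right.
    + auto_derive; auto.
    + ring.
    + apply filter_forall; intros r Hr.
      apply Rmult_lt_0_compat; [lra | apply Rdiv_lt_0_compat; nra].
Qed.

Theorem theorem1 (M : R) (HM : 0 < M) :
  (* (i) exterior *)
  ( (* Phi(t,r,w) = (t, rM/(r-M), w) is a diffeomorphism of Ext onto Ext *)
    diffeo2 (ExtD M) (ExtD M) (fun t r => t) (fun t r => PhiR M r)
    (* Phi o Phi = id *)
    /\ (forall r, M < r -> PhiR M (PhiR M r) = r)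
    (* Phi^* g = M^2/(r-M)^2 g *)
    /\ meq_on (ExtD M) (pullback (fun t r => t) (fun t r => PhiR M r) (gExt M))
                       (scale (cfac M) (gExt M))
    (* Phi^* ghat = ghat, ghat = r^{-2} g *)
    /\ meq_on (ExtD M)
         (pullback (fun t r => t) (fun t r => PhiR M r) (scale rinv2 (gExt M)))
         (scale rinv2 (gExt M))
    (* photon sphere r = 2M is fixed *)
    /\ PhiR M (2 * M) = 2 * M
    (* chart expression: outgoing (u,R) of start, ingoing (v',R') of image:
       v' = u, R' = (1 - M R)/M *)
    /\ (forall t r, M < r ->
          t + rstar M (PhiR M r) = t - rstar M r
          /\ / PhiR M r = (1 - M * / r) / M)
    (* symmetric chart expression: ingoing (v,R) of start, outgoing (u',R')
       of image: u' = v, R' = (1 - M R)/M *)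
    /\ (forall t r, M < r ->
          t - rstar M (PhiR M r) = t + rstar M r
          /\ / PhiR M r = (1 - M * / r) / M)
    (* the chart map R |-> (1 - M R)/M extends to the boundary values
       R = 0 (scri^+ resp. scri^-) and R = 1/M (H^- resp. H^+), exchanging them:
       scri^+ -> H^+, H^- -> scri^-  (and, in the other chart pair,
       scri^- -> H^-, H^+ -> scri^+) *)
    /\ (1 - M * 0) / M = / M /\ (1 - M * / M) / M = 0 )
  /\
  (* (ii) interior *)
  ( diffeo2 (IntD M) ND (fun u r => u + 2 * rstar M r) (fun u r => PhiR M r)
    /\ meq_on (IntD M)
         (pullback (fun u r => u + 2 * rstar M r) (fun u r => PhiR M r) (gEF M))
         (scale (cfac M) (gEF M))
    /\ meq_on (IntD M)
         (pullback (fun u r => u + 2 * rstar M r) (fun u r => PhiR M r)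
                   (scale rinv2 (gEF M)))
         (scale rinv2 (gEF M))
    (* r' = -r turns g_N into (1+M/r')^2 dv^2 - 2 dv dr' - r'^2 dw^2,
       extreme RN with mass -M and charge +-M in ingoing EF form *)
    /\ meq_on NposD (pullback (fun v r' => v) (fun v r' => - r') (gEF M))
         (WMetric (fun v r' => (1 + M / r') ^ 2) (fun v r' => -1)
                  (fun v r' => 0) (fun v r' => - r' ^ 2))
    /\ (forall q, (q = M \/ q = - M) ->
          meq_on NposD (pullback (fun v r' => v) (fun v r' => - r') (gEF M))
                       (gRN_in (- M) q))
    (* singularity r -> 0+ corresponds to r' -> 0+ *)
    /\ filterlim (fun r => - PhiR M r) (at_right 0) (at_right 0)
    (* horizon r -> M- corresponds to r' -> +oo *)
    /\ filterlim (fun r => - PhiR M r) (at_left M) (Rbar_locally p_infty) ).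
Proof.
  split; [split; [|split; [|split; [|split; [|split; [|split; [|split]]]]]]
         |split; [|split; [|split; [|split; [|split; [|split]]]]]].
  - now apply exterior_diffeo.
  - intros r Hr; apply PhiR_involutive; lra.
  - now apply exterior_conformal.
  - now apply exterior_rescaled_isometry.
  - unfold PhiR; field; lra.
  - intros t r Hr; destruct (chart_form M r HM Hr) as [E1 E2].
    rewrite E1; split; [ring | exact E2].
  - intros t r Hr; destruct (chart_form M r HM Hr) as [E1 E2].
    rewrite E1; split; [ring | exact E2].
  - split; field; lra.
  - now apply interior_diffeo.
  - now apply interior_conformal.
  - now apply interior_rescaled_isometry.
  - apply negative_mass_form.
  - apply negative_mass_RN.
  - now apply singularity_to_singularity.
  - now apply horizon_to_infinity.
Qed.
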